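(* Assume source and target traces are related via ${\sim}=\langle \overset{\circ}{\sim},\overset{\bullet}{\sim}\rangle$, i.e. $s\sim t\iff s^\circ\overset{\circ}{\sim}t^\circ \wedge s^\bullet\overset{\bullet}{\sim}t^\bullet$, where $\overset{\circ}{\sim}$ and $\overset{\bullet}{\sim}$ are both total maps from target to source (input, resp. output) projections, and $\overset{\circ}{\sim}$ is surjective. Assume the compilation chain satisfies $\mathit{CC}^{\sim}$, and let $\phi_S\in\mathit{uco}(2^{\mathit{Trace}_S^\circ})$ and $\rho_S\in\mathit{uco}(2^{\mathit{Trace}_S^\bullet})$. If a source program $W$ satisfies $\mathit{ANI}[\phi_S,\rho_S]$, then $W{\downarrow}$ satisfies $\mathit{ANI}[\phi_T^\#,\rho_T^\#]$, where $\phi_T^\# = g^\circ\circ\phi_S\circ f^\circ$, $\rho_T^\# = g^\bullet\circ\rho_S\circ f^\bullet$, with $f^\circ(\pi_T^\circ)=\{s^\circ\mid\exists t^\circ\in\pi_T^\circ.\ s^\circ\overset{\circ}{\sim}t^\circ\}$, $g^\circ(\pi_S^\circ)=\{t^\circ\mid\forall s^\circ.\ s^\circ\overset{\circ}{\sim}t^\circ\Rightarrow s^\circ\in\pi_S^\circ\}$, and $f^\bullet,g^\bullet$ defined analogously using $\overset{\bullet}{\sim}$ and output projections.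
   Context: A compilation chain consists of source (whole) programs $W$, target programs, sets $\mathit{Trace}_S,\mathit{Trace}_T$ of source and target traces, semantics relations $W\rightsquigarrow t$ (W can produce $t$) at both levels, and a compiler $W\mapsto W{\downarrow}$; $\mathit{beh}(W)=\{t\mid W\rightsquigarrow t\}$, and $W$ satisfies a hyperproperty $H$ (set of sets of traces) iff $\mathit{beh}(W)\in H$. $\mathit{CC}^{\sim}$ states: for every $W$ and $t$, if $W{\downarrow}\rightsquigarrow t$ then there is $s\sim t$ with $W\rightsquigarrow s$. Each trace $t$ has a disjoint input projection $t^\circ$ and output projection $t^\bullet$; $\mathit{Trace}^\circ$, $\mathit{Trace}^\bullet$ denote the sets of input and output projections. ''$\overset{\circ}{\sim}$ is a total map from target to source'' means every target input projection is related to exactly one source input projection; ''surjective'' means every source input projection is related to some target one. An upper closure operator ($\mathit{uco}$) on a powerset ordered by inclusion is a monotone, idempotent, extensive map. Abstract noninterference: $\mathit{ANI}[\phi,\rho]=\{\pi\mid\forall t_1,t_2\in\pi.\ \phi(t_1^\circ)=\phi(t_2^\circ)\Rightarrow\rho(t_1^\bullet)=\rho(t_2^\bullet)\}$, where $\phi(x)$ abbreviates $\phi(\{x\})$ and similarly for $\rho$. *)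

Set Implicit Arguments.

Definition uco (A : Type) (phi : (A -> Prop) -> (A -> Prop)) : Prop :=
  (forall X Y : A -> Prop, (forall x, X x -> Y x) -> forall x, phi X x -> phi Y x)
  /\ (forall X : A -> Prop, phi (phi X) = phi X)
  /\ (forall (X : A -> Prop) x, X x -> phi X x).

Definition single (A : Type) (a : A) : A -> Prop := fun x => x = a.

Definition ANI (T I O : Type) (inp : T -> I) (out : T -> O)
  (phi : (I -> Prop) -> (I -> Prop)) (rho : (O -> Prop) -> (O -> Prop))
  (pi : T -> Prop) : Prop :=
  forall t1 t2, pi t1 -> pi t2 ->
    phi (single (inp t1)) = phi (single (inp t2)) ->
    rho (single (out t1)) = rho (single (out t2)).

(* rel s t : "s ~ t" with s a source element, t a target element. *)
Definition total_map_target_to_source (S T : Type) (rel : S -> T -> Prop) : Prop :=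
  forall t : T, exists! s : S, rel s t.

Definition surjective_rel (S T : Type) (rel : S -> T -> Prop) : Prop :=
  forall s : S, exists t : T, rel s t.

Definition fmap (S T : Type) (rel : S -> T -> Prop) (X : T -> Prop) : S -> Prop :=
  fun s => exists t, X t /\ rel s t.

Definition gmap (S T : Type) (rel : S -> T -> Prop) (Y : S -> Prop) : T -> Prop :=
  fun t => forall s, rel s t -> Y s.

Definition sim_pair (TS TT IS IT OS OT : Type)
  (inS : TS -> IS) (outS : TS -> OS) (inT : TT -> IT) (outT : TT -> OT)
  (reli : IS -> IT -> Prop) (relo : OS -> OT -> Prop) (s : TS) (t : TT) : Prop :=
  reli (inS s) (inT t) /\ relo (outS s) (outT t).

Definition beh (P T : Type) (sem : P -> T -> Prop) (W : P) : T -> Prop := fun t => sem W t.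

Definition CC_sim (PS PT TS TT : Type) (semS : PS -> TS -> Prop) (semT : PT -> TT -> Prop)
  (compile : PS -> PT) (sim : TS -> TT -> Prop) : Prop :=
  forall W t, semT (compile W) t -> exists s, sim s t /\ semS W s.

Definition surjective (A B : Type) (f : A -> B) : Prop := forall b, exists a, f a = b.

(** Every target trace [t] has a unique related source trace [s], with
    [f {t°} = {s°}] and [f {t•} = {s•}]; so the target abstractions of [t]
    are the [g]-images of the source abstractions of [s].  Surjectivity of
    the input relation makes [g°] injective, hence equal target input
    abstractions force equal source input abstractions, and ANI of [W]
    transfers to [W↓] through CC. *)

From Stdlib Require Import FunctionalExtensionality PropExtensionality.

Set Implicit Arguments.

Section TotalMap.

Variables (S T : Type) (rel : S -> T -> Prop).
Hypothesis rel_total : total_map_target_to_source rel.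

Lemma total_map_unique {s s' : S} {t : T} : rel s t -> rel s' t -> s = s'.
Proof.
  intros Hs Hs'. destruct (rel_total t) as [s0 [_ U]].
  now rewrite <- (U s Hs), <- (U s' Hs').
Qed.

Lemma fmap_single {s : S} {t : T} : rel s t -> fmap rel (single t) = single s.
Proof.
  intros Hst. apply functional_extensionality; intro x.
  apply propositional_extensionality; unfold fmap, single; split.
  - intros [t' [-> Hxt]]. exact (total_map_unique Hxt Hst).
  - intros ->. now exists t.
Qed.

Lemma gmap_related (Y : S -> Prop) {s : S} {t : T} :
  rel s t -> (gmap rel Y t <-> Y s).
Proof.
  intros Hst; unfold gmap; split.
  - intros G; exact (G s Hst).
  - intros Ys s' Hs't. now rewrite (total_map_unique Hs't Hst).
Qed.

Lemma gmap_inj : surjective_rel rel ->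
  forall Y1 Y2 : S -> Prop, gmap rel Y1 = gmap rel Y2 -> Y1 = Y2.
Proof.
  intros rel_surj Y1 Y2 HY. apply functional_extensionality; intro s.
  apply propositional_extensionality.
  destruct (rel_surj s) as [t Hst].
  rewrite <- (gmap_related Y1 Hst), <- (gmap_related Y2 Hst), HY.
  reflexivity.
Qed.

End TotalMap.

Theorem theorem4p1
  (PS PT TS TT IS IT OS OT : Type)
  (semS : PS -> TS -> Prop) (semT : PT -> TT -> Prop) (compile : PS -> PT)
  (inS : TS -> IS) (outS : TS -> OS) (inT : TT -> IT) (outT : TT -> OT)
  (HinS : surjective inS) (HoutS : surjective outS)
  (HinT : surjective inT) (HoutT : surjective outT)
  (reli : IS -> IT -> Prop) (relo : OS -> OT -> Prop)
  (Hreli_total : total_map_target_to_source reli)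
  (Hrelo_total : total_map_target_to_source relo)
  (Hreli_surj : surjective_rel reli)
  (HCC : CC_sim semS semT compile (sim_pair inS outS inT outT reli relo))
  (phiS : (IS -> Prop) -> (IS -> Prop)) (rhoS : (OS -> Prop) -> (OS -> Prop))
  (Hphi : uco phiS) (Hrho : uco rhoS)
  (W : PS) :
  ANI inS outS phiS rhoS (beh semS W) ->
  ANI inT outT
    (fun X => gmap reli (phiS (fmap reli X)))
    (fun X => gmap relo (rhoS (fmap relo X)))
    (beh semT (compile W)).
Proof.
  intros HANI t1 t2 Ht1 Ht2 Hin.
  destruct (HCC W t1 Ht1) as [s1 [[Hi1 Ho1] Hs1]].
  destruct (HCC W t2 Ht2) as [s2 [[Hi2 Ho2] Hs2]].
  rewrite (fmap_single Hreli_total Hi1), (fmap_single Hreli_total Hi2) in Hin.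
  rewrite (fmap_single Hrelo_total Ho1), (fmap_single Hrelo_total Ho2).
  apply (gmap_inj Hreli_total Hreli_surj) in Hin.
  now rewrite (HANI s1 s2 Hs1 Hs2 Hin).
Qed.
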